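(* Assume (AS1) and (AS2) below. Then the set $$\mathcal{C}=\Big\{\xi=(\xi_0,\xi_1,\dots,\xi_L)\in\mathbb{R}^{L+1}\;:\;\exists\,p\in\mathcal{P}\ \text{with}\ v(p)\ge \xi_0\ \text{and}\ u_i(p)\ge \xi_i+c_i\ \text{for all } i=1,\dots,L\Big\}$$ is convex.
   Context: Setting. Fix an integer $L\ge 1$ and a constant $P_{\max}>0$. A random channel matrix $H$ takes values in a set $\mathcal{H}\subseteq\mathbb{R}^{L\times L}$ and has distribution $\mu$ on the Borel $\sigma$-algebra of $\mathcal{H}$. $\mathbb{E}$ denotes expectation with respect to $\mu$. A power policy is a Borel-measurable map $p:\mathcal{H}\to\mathbb{R}^L$, $p(H)=(p_1(H),\dots,p_L(H))$. Fix a measurable ''selection pattern'' $\sigma:\mathcal{H}\to\{0,1\}^L$. (In the paper, $\sigma_i(H)=\mathbb{1}(p^\star_i(H)>0)$ is the zero/non-zero pattern of an optimal policy $p^\star$.) Define the feasible policy set $$\mathcal{P}=\{p \text{ measurable}: p(H)\in[0,P_{\max}]^L \text{ and } \mathbb{1}(p_i(H)>0)=\sigma_i(H)\ \text{for all } i \text{ and all } H\in\mathcal{H}\}.$$ Assume $\rho_i:=\mu(\{H:\sigma_i(H)=1\})>0$ for every $i$. Let $f_0:\mathbb{R}^L\times\mathbb{R}^{L\times L}\to\mathbb{R}^L$ and $f_{c,i}:\mathbb{R}^L\times\mathbb{R}^{L\times L}\to\mathbb{R}$ for $i=1,\dots,L$ be measurable. Assume that for every $p\in\mathcal{P}$ the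 functions $H\mapsto f_0(p(H),H)$ and $H\mapsto f_{c,i}(p(H),H)$ are $\mu$-integrable. Let $g:\mathbb{R}^L\to\mathbb{R}$. For $p\in\mathcal{P}$, define $$v(p)=g\big(\mathbb{E}[f_0(p(H),H)]\big),\qquad u_i(p)=\mathbb{E}\big[f_{c,i}(p(H),H)\,\big|\,p_i(H)>0\big]=\frac{1}{\rho_i}\int_{\{\sigma_i=1\}} f_{c,i}(p(H),H)\,d\mu.$$ Here $\mathbb{E}$ of a vector is taken componentwise. The constants $c_1,\dots,c_L\ge 0$ are fixed. Assumptions. (AS1) $\mu$ is non-atomic. (AS2) $g$ is concave and non-decreasing (componentwise). *)

From HB Require Import structures.
From mathcomp Require Import all_boot all_order all_algebra.
From mathcomp Require Import all_classical all_reals all_analysis.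
Set Implicit Arguments. Unset Strict Implicit. Unset Printing Implicit Defensive.
Import Order.TTheory GRing.Theory Num.Theory.
Local Open Scope classical_set_scope.
Local Open Scope ring_scope.

Definition nonatomic d (T : measurableType d) (R : realType)
  (mu : set T -> \bar R) : Prop :=
  forall A : set T, measurable A -> (0 < mu A)%E ->
    exists B : set T, [/\ measurable B, B `<=` A & (0 < mu B < mu A)%E].

Definition concave_vec (R : realType) (L : nat) (g : ('I_L -> R) -> R) : Prop :=
  forall (x y : 'I_L -> R) (t : R), 0 <= t <= 1 ->
    t * g x + (1 - t) * g y <= g (fun i => t * x i + (1 - t) * y i).

Definition nondecreasing_vec (R : realType) (L : nat) (g : ('I_L -> R) -> R) : Prop :=
  forall x y : 'I_L -> R, (forall i, x i <= y i) -> g x <= g y.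

(* measurability of a map T -> R^L (Borel on R^L = product sigma-algebra) *)
Definition measurable_policy d (T : measurableType d) (R : realType) (L : nat)
  (p : T -> 'I_L -> R) : Prop :=
  forall i : 'I_L, measurable_fun setT (fun h => p h i).

Definition feasible d (T : measurableType d) (R : realType) (L : nat)
  (Pmax : R) (sigma : T -> 'I_L -> bool) (p : T -> 'I_L -> R) : Prop :=
  [/\ measurable_policy p,
      (forall h i, 0 <= p h i <= Pmax) &
      (forall h i, (0 < p h i) = sigma h i)].

Definition vobj d (T : measurableType d) (R : realType) (L : nat)
  (mu : probability T R) (g : ('I_L -> R) -> R)
  (f0 : ('I_L -> R) -> T -> 'I_L -> R) (p : T -> 'I_L -> R) : R :=
  g (fun i => Rintegral mu setT (fun h => f0 (p h) h i)).

Definition ucon d (T : measurableType d) (R : realType) (L : nat)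
  (mu : probability T R) (sigma : T -> 'I_L -> bool)
  (fc : 'I_L -> ('I_L -> R) -> T -> R) (p : T -> 'I_L -> R) (i : 'I_L) : R :=
  (fine (mu [set h | sigma h i]))^-1 *
    Rintegral mu [set h | sigma h i] (fun h => fc i (p h) h).

(* the set C in R^{L+1}; coordinate 0 is xi_0, coordinate lift ord0 i is xi_i *)
Definition regionC d (T : measurableType d) (R : realType) (L : nat)
  (mu : probability T R) (Pmax : R) (sigma : T -> 'I_L -> bool)
  (f0 : ('I_L -> R) -> T -> 'I_L -> R) (fc : 'I_L -> ('I_L -> R) -> T -> R)
  (g : ('I_L -> R) -> R) (c : 'I_L -> R) : set ('I_L.+1 -> R) :=
  [set xi | exists p, [/\ feasible Pmax sigma p,
      xi ord0 <= vobj mu g f0 p &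
      forall i : 'I_L, xi (lift ord0 i) + c i <= ucon mu sigma fc p i]].

Definition convex_vset (R : realType) (n : nat) (C : set ('I_n -> R)) : Prop :=
  forall x y (t : R), C x -> C y -> 0 <= t <= 1 ->
    C (fun k => t * x k + (1 - t) * y k).

(* Given points of C witnessed by feasible policies p1, p2 and t in [0, 1], we
   find a measurable set A of channel states such that the policy "p1 on A, p2
   elsewhere" realises exactly t * (integrals of p1) + (1 - t) * (integrals of
   p2) for the finitely many integrals defining v and the u_i.  Patching keeps
   feasibility, each u_i is a fixed multiple of such an integral and v is a
   concave function of them, so the patched policy witnesses the convex
   combination of the two points.

   The set A is provided by Lyapunov's convexity theorem for finitely many
   finitely additive set functions that are absolutely continuous with respect
   to the non-atomic probability mu.  We prove it by halving:
   - Sierpinski's lemma: every measurable set has a subset of half its measure;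
   - a bisection argument adds one set function at a time to a family (always
     containing mu) for which simultaneous halving is possible;
   - halving along the binary expansion of t gives a subset carrying the
     fraction t of every set function of the family.
   All limits are handled by continuity from below and absolute continuity. *)

From HB Require Import structures.
From mathcomp Require Import all_boot all_order all_algebra.
From mathcomp Require Import all_classical all_reals all_analysis.
From mathcomp Require Import ring lra.
Import Order.TTheory GRing.Theory Num.Theory.
Import numFieldNormedType.Exports.
Local Open Scope classical_set_scope.
Local Open Scope ring_scope.
Set Implicit Arguments.
Unset Strict Implicit.

Lemma cvg_halving (R : realType) (c : R) : (2^-1) ^+ n * c @[n --> \oo] --> 0.
Proof.
have := @cvg_geometric R c (2^-1).
rewrite ger0_norm ?invr_ge0 // invf_lt1 ?ltr1n // => /(_ isT).
by apply: cvg_trans; apply: near_eq_cvg; near=> n; rewrite /geometric mulrC.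
Unshelve. all: end_near.
Qed.

Lemma disjoint_subset (U : Type) (A B A' B' : set U) :
  A `&` B = set0 -> A' `<=` A -> B' `<=` B -> A' `&` B' = set0.
Proof. by move=> AB sA sB; apply/seteqP; split => // x [/sA xA /sB xB]; rewrite -AB. Qed.

(* x lies between a and b, in either order. *)
Definition between (R : realType) (a b x : R) : bool := (x - a) * (x - b) <= 0.

Lemma between_split (R : realType) (a b m x : R) :
  between a b x -> ~~ between a m x -> between m b x.
Proof.
rewrite /between -ltNge => hab ham.
have hp : 0 < (x - a) ^+ 2.
  by rewrite exprn_even_gt0 //=; apply: contraTneq ham => ->; rewrite mul0r ltxx.
rewrite -(pmulr_rle0 _ hp).
rewrite (_ : (x - a) ^+ 2 * ((x - m) * (x - b)) = (x - a) * (x - m) * ((x - a) * (x - b))).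
  by rewrite pmulr_rle0.
by ring.
Qed.

Lemma between_shift (R : realType) (a b x c a' b' : R) :
  a' = a - c -> b' = b - c -> between a b x -> between a' b' (x - c).
Proof.
move=> -> ->; rewrite /between; have -> : x - c - (a - c) = x - a by ring.
by have -> : x - c - (b - c) = x - b by ring.
Qed.

Lemma between_norm (R : realType) (a b x : R) : between a b x -> `|x| <= `|a| + `|b|.
Proof.
rewrite /between => hx.
have := ler_norm a; have := ler_norm b; have := ler_norm (- a); have := ler_norm (- b).
by rewrite !normrN ler_norml => na nb a1 b1; apply/andP; split; nra.
Qed.

Section Absolute_continuity.
Context d (T : measurableType d) (R : realType) (mu : probability T R).

Definition rmu (A : set T) : R := fine (mu A).

Lemma rmuE A : measurable A -> mu A = (rmu A)%:E.
Proof. by move=> mA; rewrite /rmu fineK // fin_num_measure. Qed.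

Lemma rmu0 : rmu set0 = 0.
Proof. by rewrite /rmu measure0. Qed.

Lemma rmu_ge0 A : 0 <= rmu A.
Proof. by rewrite /rmu fine_ge0. Qed.

Lemma rmu_le1 A : measurable A -> rmu A <= 1.
Proof. by move=> mA; rewrite -lee_fin -rmuE // probability_le1. Qed.

Lemma le_rmu A B : measurable A -> measurable B -> A `<=` B -> rmu A <= rmu B.
Proof.
by move=> mA mB AB; rewrite -lee_fin -!rmuE //; apply: le_measure => //; rewrite inE.
Qed.

(* A real set function that is finitely additive and uniformly absolutely
   continuous with respect to mu; these are the set functions Lyapunov's
   theorem is about. *)
Record ac_additive (nu : set T -> R) : Prop := {
  ac_additiveU : forall A B, measurable A -> measurable B -> A `&` B = set0 ->
    nu (A `|` B) = nu A + nu B;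
  ac_additive_small : forall e, 0 < e -> exists2 del, 0 < del &
    forall A, measurable A -> rmu A < del -> `|nu A| < e }.

Lemma rmu_ac : ac_additive rmu.
Proof.
split => [A B mA mB AB | e e0]; last by exists e => // A _; rewrite ger0_norm ?rmu_ge0.
apply: EFin_inj; rewrite EFinD -!rmuE ?measureU //; exact: measurableU.
Qed.

Lemma integral_ac (f : T -> R) (S : set T) :
  mu.-integrable setT (EFin \o f) -> measurable S ->
  ac_additive (fun A => Rintegral mu (A `&` S) f).
Proof.
move=> intf mS; split => [A B mA mB AB | e e0].
  rewrite setIUl Rintegral_setU //; try exact: measurableI.
    by apply: integrableS intf => //; apply: measurableU; exact: measurableI.
  by apply/eqP; rewrite setIACA AB set0I.
have [del [del0 hdel]] := integral_normr_continuous intf e0.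
exists del => // A mA Adel; have mAS : measurable (A `&` S) by exact: measurableI.
apply: le_lt_trans (le_normr_Rintegral _ _) _ => //; first exact: integrableS intf.
apply: hdel => //; rewrite [X in (X < _)%E](rmuE mAS) lte_fin; apply: le_lt_trans Adel.
by apply: le_rmu => //; exact: subIsetl.
Qed.

Lemma ac_setD nu A B : ac_additive nu -> measurable A -> measurable B ->
  B `<=` A -> nu (A `\` B) = nu A - nu B.
Proof.
move=> nuac mA mB BA; rewrite -[in nu A](setDUK BA) ac_additiveU //; first ring.
- exact: measurableD.
- by rewrite setDIK.
Qed.

Lemma ac_set0 nu : ac_additive nu -> nu set0 = 0.
Proof.
move=> nuac; have := ac_additiveU nuac measurable0 measurable0 (setI0 set0).
by rewrite setU0 => /eqP; rewrite -subr_eq subrr eq_sym => /eqP.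
Qed.

Lemma ac_cvg0 nu (A : nat -> set T) : ac_additive nu ->
  (forall n, measurable (A n)) -> rmu (A n) @[n --> \oo] --> 0 ->
  nu (A n) @[n --> \oo] --> 0.
Proof.
move=> nuac mA A0; apply/cvgr0Pnorm_lt => e e0.
have [del del0 hdel] := ac_additive_small nuac e0.
near=> n; apply: hdel => //; rewrite -[rmu _](@ger0_norm _ _ (rmu_ge0 _)).
by near: n; exact: cvgr0_norm_lt.
Unshelve. all: end_near.
Qed.

Lemma cvg_rmu_bigcup (D : nat -> set T) : (forall n, measurable (D n)) ->
  (forall n, D n `<=` D n.+1) -> rmu (D n) @[n --> \oo] --> rmu (\bigcup_n D n).
Proof.
move=> mD incD; have mU : measurable (\bigcup_n D n) by exact: bigcup_measurable.
apply: (@fine_cvg _ _ _ _ (mu \o D)); rewrite -rmuE //.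
by apply: nondecreasing_cvg_mu => //; apply/nondecreasing_seqP => n; rewrite subsetEset.
Qed.

Lemma cvg_ac_bigcup nu (D : nat -> set T) : ac_additive nu ->
  (forall n, measurable (D n)) -> (forall n, D n `<=` D n.+1) ->
  nu (D n) @[n --> \oo] --> nu (\bigcup_n D n).
Proof.
move=> nuac mD incD; set U := \bigcup_n D n.
have mU : measurable U by exact: bigcup_measurable.
have DU n : D n `<=` U by exact: bigcup_sup.
have rest0 : nu (U `\` D n) @[n --> \oo] --> 0.
  apply: (ac_cvg0 (A := fun n => U `\` D n) nuac) => [n|]; first exact: measurableD.
  rewrite (_ : (fun n => _) = fun n => rmu U - rmu (D n)); last first.
    by apply/funext => n; rewrite (ac_setD rmu_ac).
  by rewrite -(subrr (rmu U)); apply: cvgB; [exact: cvg_cst | exact: cvg_rmu_bigcup].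
rewrite (_ : (fun n => _) = fun n => nu U - nu (U `\` D n)); last first.
  by apply/funext => n; rewrite (ac_setD nuac) // opprB addrC subrK.
by rewrite -[X in _ --> X](subr0 (nu U)); apply: cvgB => //; exact: cvg_cst.
Qed.

End Absolute_continuity.

Section Sierpinski.
Context d (T : measurableType d) (R : realType) (mu : probability T R).
Local Notation rmu := (rmu mu).
Hypothesis nonat : nonatomic mu.

(* Non-atomicity yields subsets of positive but arbitrarily small measure:
   splitting repeatedly and keeping the smaller piece halves the measure. *)
Lemma small_subset E e : measurable E -> 0 < rmu E -> 0 < e ->
  exists B, [/\ measurable B, B `<=` E, 0 < rmu B & rmu B < e].
Proof.
move=> mE E0 e0.
have shrink n : exists B, [/\ measurable B, B `<=` E, 0 < rmu B &
    rmu B <= (2^-1) ^+ n * rmu E].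
  elim: n => [|n [B [mB BE B0 Bn]]]; first by exists E; split; rewrite // expr0 mul1r.
  have := nonat mB; rewrite rmuE // lte_fin => /(_ B0) [C [mC CB]].
  rewrite !rmuE // !lte_fin => /andP[C0 CltB].
  have BC := ac_setD (rmu_ac mu) mB mC CB.
  rewrite exprS -mulrA.
  have [Csmall|Cbig] := leP (rmu C) (2^-1 * rmu B).
    by exists C; split => //; [exact: subset_trans CB BE | lra].
  exists (B `\` C); split; [exact: measurableD | by move=> x [/BE] | |];
    rewrite BC; lra.
have [N _ hN] := cvgr0_norm_lt _ (cvg_halving (rmu E)) _ e0.
have [B [mB BE B0 BN]] := shrink N; exists B; split => //.
have := hN N (leqnn N); have := ler_norm ((2^-1) ^+ N * rmu E) => /=; lra.
Qed.

Definition admissible (E : set T) (tau : R) (F B : set T) :=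
  [/\ measurable B, B `<=` E `\` F & rmu F + rmu B <= tau].

Lemma admissible_disj E tau F B : admissible E tau F B -> F `&` B = set0.
Proof. by case=> _ BEF _; apply/seteqP; split => // x [Fx /BEF []]. Qed.

Lemma greedy_increment E tau F : rmu F <= tau -> exists B,
  admissible E tau F B /\ forall B', admissible E tau F B' -> rmu B' <= 2 * rmu B.
Proof.
move=> Ft; set S := rmu @` admissible E tau F.
have adm0 : admissible E tau F set0 by split => //; rewrite rmu0 addr0.
have supS : has_sup S.
  split; first by exists 0, set0 => //; exact: rmu0.
  by exists 1 => _ [B [mB _ _] <-]; exact: rmu_le1.
have [s0|s0] := leP (sup S) 0.
  exists set0; split => // B' aB'; rewrite rmu0 mulr0; apply: le_trans s0.
  by apply: sup_upper_bound => //; exists B'.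
have [_ [B aB <-] hB] := sup_adherent (divr_gt0 s0 (@ltr0Sn _ 1)) supS.
exists B; split => // B' aB'.
have : rmu B' <= sup S by apply: sup_upper_bound => //; exists B'.
lra.
Qed.

Lemma greedy_chain E tau : 0 <= tau -> exists Fs : nat -> set T,
  [/\ forall n, measurable (Fs n), forall n, Fs n `<=` Fs n.+1,
      forall n, Fs n `<=` E, forall n, rmu (Fs n) <= tau &
      forall n B, admissible E tau (Fs n) B -> rmu B <= 2 * (rmu (Fs n.+1) - rmu (Fs n))].
Proof.
move=> tau0; have /choice [inc incP] : forall F, exists B, rmu F <= tau ->
    admissible E tau F B /\ forall B', admissible E tau F B' -> rmu B' <= 2 * rmu B.
  move=> F; have [/(greedy_increment E) [B hB]|Ft] := leP (rmu F) tau; first by exists B.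
  by exists set0.
pose Fs := fix Fs n := if n is m.+1 then Fs m `|` inc (Fs m) else set0.
have FsP n : [/\ measurable (Fs n), Fs n `<=` E & rmu (Fs n) <= tau].
  elim: n => [|n [mF FE Ft]] /=; first by rewrite rmu0; split.
  have [[mB BE Bt] _] := incP _ Ft.
  split; [exact: measurableU | by move=> x [/FE|/BE[]] |].
  by rewrite (ac_additiveU (rmu_ac mu)) // (admissible_disj (incP _ Ft).1).
exists Fs; split => [n|n|n|n|n B aB]; try by case: (FsP n).
  by move=> x Fx; left.
case: (FsP n) => mFn _ Fnt; have [aI maxI] := incP _ Fnt.
have [mI _ _] := aI.
rewrite /= (ac_additiveU (rmu_ac mu)) ?(admissible_disj aI) //.
by have := maxI B aB; lra.
Qed.

(* The union F of a greedy chain cannot fall short of the target: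
   otherwise a small subset of E \ F would be admissible at every step,
   forcing the increments to stay large. *)
Lemma half_subset E : measurable E ->
  exists F, [/\ measurable F, F `<=` E & rmu F = 2^-1 * rmu E].
Proof.
move=> mE; set tau := 2^-1 * rmu E.
have tau0 : 0 <= tau by have := rmu_ge0 mu E; rewrite /tau; lra.
have [Fs [mFs incF FsE Fstau Fsmax]] := greedy_chain E tau0.
set F := \bigcup_n Fs n.
have mF : measurable F by exact: bigcup_measurable.
have FsF n : Fs n `<=` F by exact: bigcup_sup.
have FE : F `<=` E by move=> x [n _ /FsE].
exists F; split => //.
have Ftau : rmu F <= tau.
  apply: ler_cvg_to (cvg_rmu_bigcup mFs incF) (cvg_cst tau) _.
  exact: nearW.
apply/eqP; rewrite eq_le Ftau /= leNgt; apply/negP => Flt.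
have mEF : measurable (E `\` F) by exact: measurableD.
have EF0 : 0 < rmu (E `\` F).
  rewrite (ac_setD (rmu_ac mu)) //.
  by have := rmu_ge0 mu F; rewrite /tau in Flt *; lra.
have gap : 0 < tau - rmu F by rewrite subr_gt0.
have [B [mB BEF B0 Bsmall]] := small_subset mEF EF0 gap.
have aB n : admissible E tau (Fs n) B.
  split => //; first by move=> x /BEF [Ex nFx]; split => // /(FsF n).
  by have := le_rmu mu (mFs n) mF (FsF n); lra.
have grow n : n%:R * (rmu B / 2) <= rmu (Fs n).
  elim: n => [|n IH]; first by rewrite mul0r rmu_ge0.
  by rewrite -natr1 mulrDl mul1r; have := Fsmax n B (aB n); lra.
have [n hn] : exists n : nat, 2 / rmu B < n%:R.
  by exists (Num.Def.archi_bound (2 / rmu B)); rewrite archi_boundP // divr_ge0 // ltW.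
rewrite ltr_pdivrMr // in hn.
by have := grow n; have := Fstau n; have := rmu_le1 mu mE; rewrite /tau; lra.
Qed.

End Sierpinski.

Section Halving.
Context d (T : measurableType d) (R : realType) (mu : probability T R).
Local Notation ac_additive := (ac_additive mu).

Definition halvable (I : Type) (nu : I -> set T -> R) : Prop :=
  forall E, measurable E -> exists F, [/\ measurable F, F `<=` E &
    forall k, nu k F = 2^-1 * nu k E].

Lemma halvable_reindex (I J : Type) (nu : I -> set T -> R) (nu' : J -> set T -> R) :
  (forall j, exists i, nu' j = nu i) -> halvable nu -> halvable nu'.
Proof.
move=> sub hnu E mE; have [F [mF FE hF]] := hnu E mE.
by exists F; split => // j; have [i ->] := sub j.
Qed.

Lemma halvable_choice I (nu : I -> set T -> R) : halvable nu ->
  exists hv : set T -> set T, forall E, measurable E ->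
    [/\ measurable (hv E), hv E `<=` E & forall k, nu k (hv E) = 2^-1 * nu k E].
Proof.
move=> hnu; have /choice [hv hvP] : forall E, exists F, measurable E ->
    [/\ measurable F, F `<=` E & forall k, nu k F = 2^-1 * nu k E].
  move=> E; have [/hnu [F hF]|nE] := pselect (measurable E); first by exists F.
  by exists set0 => /nE.
by exists hv.
Qed.

Definition extend (I : Type) (nu : I -> set T -> R) (f : set T -> R) :
  option I -> set T -> R := fun k => if k is Some i then nu i else f.

Section Dyadic.
Variables (I : Type) (nu : I -> set T -> R) (hv : set T -> set T) (E : set T) (t : R).
Hypothesis nu_ac : forall k, ac_additive (nu k).
Hypothesis hvP : forall A, measurable A ->
  [/\ measurable (hv A), hv A `<=` A & forall k, nu k (hv A) = 2^-1 * nu k A].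

(* Binary expansion of t: after n steps, [selected] has been kept, the set
   [unexplored] of relative weight 2^-n has not been examined yet, and the
   fraction [remaining] of E still has to be selected. *)
Record dyadic_state := Dyadic {
  selected : set T; unexplored : set T; remaining : R }.

Definition dyadic_next (n : nat) (st : dyadic_state) : dyadic_state :=
  let X := hv (unexplored st) in
  if (2^-1) ^+ n <= remaining st then
    Dyadic (selected st `|` X) (unexplored st `\` X) (remaining st - (2^-1) ^+ n)
  else Dyadic (selected st) (unexplored st `\` X) (remaining st).

Fixpoint dyadic (n : nat) : dyadic_state :=
  if n is m.+1 then dyadic_next n (dyadic m) else Dyadic set0 E t.

Definition dyadic_inv (n : nat) (st : dyadic_state) : Prop :=
  [/\ measurable (selected st), measurable (unexplored st),
      selected st `|` unexplored st `<=` E,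
      selected st `&` unexplored st = set0 &
      0 <= remaining st <= (2^-1) ^+ n] /\
  forall k, nu k (unexplored st) = (2^-1) ^+ n * nu k E /\
            nu k (selected st) = (t - remaining st) * nu k E.

Lemma dyadic_nextP n st : dyadic_inv n st -> dyadic_inv n.+1 (dyadic_next n.+1 st).
Proof.
case: st => A U s [[/= mA mU AUE AU /andP[s0 s1]] hnu] /=.
have [mX XU Xhalf] := hvP mU.
have mUX : measurable (U `\` hv U) by exact: measurableD.
have nuUX k : nu k (U `\` hv U) = (2^-1) ^+ n.+1 * nu k E.
  by rewrite (ac_setD (nu_ac k)) // Xhalf (hnu k).1 exprS; field.
rewrite /dyadic_next /=; case: ifPn => hs; split => [|k]; split => //=.
- exact: measurableU.
- by move=> x [[Ax|/XU Ux]|[Ux _]]; apply: AUE; [left|right|right].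
- by rewrite setIUl setDIK setU0; apply: disjoint_subset AU _ _ => // x [].
- by rewrite exprS in hs *; apply/andP; split; lra.
- rewrite (ac_additiveU (nu_ac k)) //; last exact: disjoint_subset AU _ XU.
  by rewrite Xhalf (hnu k).1 (hnu k).2 exprS; ring.
- by move=> x [Ax|[Ux _]]; apply: AUE; [left|right].
- by apply: disjoint_subset AU _ _ => // x [].
- by rewrite -ltNge exprS in hs *; apply/andP; split; lra.
- exact: (hnu k).2.
Qed.

Lemma dyadicP n : measurable E -> 0 <= t <= 1 -> dyadic_inv n (dyadic n).
Proof.
move=> mE t01; elim: n => [|n IH]; last exact: dyadic_nextP.
split; first by split => //=; rewrite ?set0U ?set0I ?expr0.
by move=> k /=; rewrite expr0 mul1r subrr mul0r (ac_set0 (nu_ac k)).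
Qed.

Lemma dyadic_fraction : measurable E -> 0 <= t <= 1 ->
  exists A, [/\ measurable A, A `<=` E & forall k, nu k A = t * nu k E].
Proof.
move=> mE t01; pose A n := selected (dyadic n).
have mA n : measurable (A n) by have [[]] := dyadicP n mE t01.
have incA n : A n `<=` A n.+1.
  by rewrite /A /= /dyadic_next; case: ifP => _ x Ax //=; left.
exists (\bigcup_n A n); split; first exact: bigcup_measurable.
  by move=> x [n _ Ax]; have [[_ _ AE _ _] _] := dyadicP n mE t01; apply: AE; left.
move=> k; apply: (cvg_unique (@Rhausdorff R) (cvg_ac_bigcup (nu_ac k) mA incA)).
have rem0 : remaining (dyadic n) @[n --> \oo] --> 0.
  apply: (squeeze_cvgr _ (cvg_cst 0) (cvg_halving 1)).
  by apply: nearW => n; rewrite mulr1; have [[_ _ _ _ ->]] := dyadicP n mE t01.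
rewrite /= (_ : (fun n => nu k (A n)) = fun n => (t - remaining (dyadic n)) * nu k E); last first.
  by apply/funext => n; have [_ /(_ k) []] := dyadicP n mE t01.
have lim := cvgM (cvgB (cvg_cst t) rem0) (cvg_cst (nu k E)).
by rewrite subr0 in lim; exact: lim.
Qed.

End Dyadic.

Lemma halvable_fraction I (nu : I -> set T -> R) E t :
  (forall k, ac_additive (nu k)) -> halvable nu -> measurable E -> 0 <= t <= 1 ->
  exists A, [/\ measurable A, A `<=` E & forall k, nu k A = t * nu k E].
Proof.
move=> nu_ac /halvable_choice [hv hvP] mE t01.
exact: (dyadic_fraction (hv := hv) nu_ac hvP mE t01).
Qed.

End Halving.

Section Bisection.
Context d (T : measurableType d) (R : realType) (mu : probability T R).
Local Notation rmu := (rmu mu).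
Local Notation ac_additive := (ac_additive mu).
Variables (I : Type) (nu : I -> set T -> R) (k0 : I) (g : set T -> R).
Variables (hv : set T -> set T) (E : set T).
Hypothesis nu_k0 : nu k0 = rmu.
Hypothesis nu_ac : forall k, ac_additive (nu k).
Hypothesis g_ac : ac_additive g.
Hypothesis hvP : forall A, measurable A ->
  [/\ measurable (hv A), hv A `<=` A & forall k, nu k (hv A) = 2^-1 * nu k A].

(* Bisection state: [kept] is already selected, [pool1] and [pool2] are two
   disjoint sets of equal weight for the family nu, and the amount [deficit]
   of g still to be collected lies between their g-values. *)
Record bisect_state := Bisect {
  kept : set T; pool1 : set T; pool2 : set T; deficit : R }.

(* Both pools are halved; one quarter-piece is kept and two are retained, so
   that the new deficit lies between the g-values of the retained pieces. *)
Definition bisect_next (st : bisect_state) : bisect_state :=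
  let: Bisect D P Q tau := st in
  let P1 := hv P in let P2 := P `\` P1 in let Q1 := hv Q in
  if between (g P) (g P2 + g Q1) tau then Bisect (D `|` P2) P1 Q1 (tau - g P2)
  else Bisect (D `|` Q1) P2 (Q `\` Q1) (tau - g Q1).

Definition bisect (n : nat) : bisect_state :=
  iter n bisect_next (Bisect set0 (hv E) (E `\` hv E) (2^-1 * g E)).

Definition bisect_inv (n : nat) (st : bisect_state) : Prop :=
  [/\ measurable (kept st), measurable (pool1 st), measurable (pool2 st),
      kept st `|` (pool1 st `|` pool2 st) `<=` E &
      kept st `&` (pool1 st `|` pool2 st) = set0 /\ pool1 st `&` pool2 st = set0] /\
  [/\ forall k, [/\ nu k (pool1 st) = (2^-1) ^+ n.+1 * nu k E,
                    nu k (pool2 st) = (2^-1) ^+ n.+1 * nu k E &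
                    nu k (kept st) = 2^-1 * nu k E - nu k (pool1 st)],
      g (kept st) + deficit st = 2^-1 * g E &
      between (g (pool1 st)) (g (pool2 st)) (deficit st)].

Lemma bisect_next_shape D P Q tau :
  measurable P -> measurable Q -> P `&` Q = set0 -> between (g P) (g Q) tau ->
  exists X Y Z, [/\ bisect_next (Bisect D P Q tau) = Bisect (D `|` X) Y Z (tau - g X),
    [/\ measurable X, measurable Y & measurable Z],
    X `|` (Y `|` Z) `<=` P `|` Q,
    X `&` (Y `|` Z) = set0 /\ Y `&` Z = set0 &
    (forall k, nu k P = nu k Q ->
       [/\ nu k X = 2^-1 * nu k P, nu k Y = 2^-1 * nu k P & nu k Z = 2^-1 * nu k P]) /\
    between (g Y) (g Z) (tau - g X)].
Proof.
move=> mP mQ PQ hb.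
have [mP1 P1P hP1] := hvP mP; have [mQ1 Q1Q hQ1] := hvP mQ.
have mP2 : measurable (P `\` hv P) by exact: measurableD.
have mQ2 : measurable (Q `\` hv Q) by exact: measurableD.
have hP2 k : nu k (P `\` hv P) = 2^-1 * nu k P.
  by rewrite (ac_setD (nu_ac k)) // hP1; field.
have hQ2 k : nu k (Q `\` hv Q) = 2^-1 * nu k Q.
  by rewrite (ac_setD (nu_ac k)) // hQ1; field.
have QP : Q `&` P = set0 by rewrite setIC.
rewrite /bisect_next; case: ifPn => hw.
  exists (P `\` hv P), (hv P), (hv Q); split => //.
  - by move=> x [[Px _]|[/P1P Px|/Q1Q Qx]]; [left|left|right].
  - split; last exact: disjoint_subset PQ P1P Q1Q.
    rewrite setIUr setDKI set0U; apply: disjoint_subset PQ _ Q1Q.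
    exact: subDsetl.
  - split => [k PQk|]; first by rewrite hP2 hP1 hQ1 PQk.
    by apply: between_shift hw; [rewrite (ac_setD g_ac) // |]; ring.
exists (hv Q), (P `\` hv P), (Q `\` hv Q); split => //.
- by move=> x [/Q1Q Qx|[[Px _]|[Qx _]]]; [right|left|right].
- split; last by apply: disjoint_subset PQ _ _; exact: subDsetl.
  rewrite setIUr setDIK setU0; apply: disjoint_subset QP Q1Q _.
  exact: subDsetl.
- split => [k PQk|]; first by rewrite hQ1 hP2 hQ2 PQk.
  by apply: between_shift (between_split hb hw); [|rewrite (ac_setD g_ac) //]; ring.
Qed.

Lemma bisect_nextP n st : bisect_inv n st -> bisect_inv n.+1 (bisect_next st).
Proof.
case: st => D P Q tau [[mD mP mQ DPQE [DPQ PQ]] [hnu hg hb]].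
have [X [Y [Z [-> [mX mY mZ] XYZ [XYZ0 YZ] [hval hbet]]]]] :=
  bisect_next_shape D mP mQ PQ hb.
have DX : D `&` X = set0 by apply: disjoint_subset DPQ _ _ => // x Xx; apply: XYZ; left.
have hk k : [/\ nu k X = 2^-1 * nu k P, nu k Y = 2^-1 * nu k P
    & nu k Z = 2^-1 * nu k P].
  by apply: hval; have [-> -> _] := hnu k.
split; split => //=.
- exact: measurableU.
- move=> x [[Dx|Xx]|YZx]; apply: DPQE; first by left.
    by right; apply: XYZ; left.
  by right; apply: XYZ; right.
- split => //; rewrite setIUl XYZ0 setU0.
  by apply: disjoint_subset DPQ _ _ => // x YZx; apply: XYZ; right.
- move=> k; have /= [hP hQ hD] := hnu k; have [hX hY hZ] := hk k.
  rewrite (ac_additiveU (nu_ac k)) // hX hY hZ hD hP !exprS.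
  by split; field.
- by rewrite (ac_additiveU g_ac) // -hg /=; ring.
Qed.

Lemma bisectP n : measurable E -> bisect_inv n (bisect n).
Proof.
move=> mE; elim: n => [|n IH]; last by rewrite /bisect iterS; exact: bisect_nextP.
have [mX XE hX] := hvP mE.
have mEX : measurable (E `\` hv E) by exact: measurableD.
have hEX k : nu k (E `\` hv E) = 2^-1 * nu k E.
  by rewrite (ac_setD (nu_ac k)) // hX; field.
split; split => //=.
- by move=> x [//|[/XE|[]]].
- by split; rewrite ?set0I // setDIK.
- by move=> k; rewrite hX hEX (ac_set0 (nu_ac k)) expr1; split => //; ring.
- by rewrite (ac_set0 g_ac) add0r.
- rewrite /between (ac_setD g_ac) //.
  rewrite (_ : _ - (_ - _) = - (2^-1 * g E - g (hv E))); last by field.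
  by rewrite mulrN oppr_le0 -expr2 sqr_ge0.
Qed.

Lemma bisect_kept_incr n : kept (bisect n) `<=` kept (bisect n.+1).
Proof.
rewrite /bisect iterS; case: (iter _ _ _) => D P Q tau /=.
by case: ifP => _ x Dx /=; left.
Qed.

Lemma bisect_pools k n : measurable E ->
  nu k (pool1 (bisect n)) = (2^-1) ^+ n * (2^-1 * nu k E) /\
  nu k (pool2 (bisect n)) = (2^-1) ^+ n * (2^-1 * nu k E).
Proof.
by move=> mE; have [_ [/(_ k) [-> -> _] _ _]] := bisectP n mE; rewrite exprSr -mulrA.
Qed.

(* Since mu belongs to the family, the measures of the pools shrink
   geometrically; g being absolutely continuous, their g-values and hence the
   deficit tend to 0. *)
Lemma bisect_deficit0 : measurable E -> deficit (bisect n) @[n --> \oo] --> 0.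
Proof.
move=> mE.
have g_pool0 (pool : bisect_state -> set T) :
    (forall n, measurable (pool (bisect n))) ->
    (forall n, nu k0 (pool (bisect n)) = (2^-1) ^+ n * (2^-1 * nu k0 E)) ->
    g (pool (bisect n)) @[n --> \oo] --> 0.
  move=> mp hp; apply: (ac_cvg0 (A := fun n => pool (bisect n)) g_ac mp).
  by rewrite -nu_k0 (funext hp); exact: cvg_halving.
have gP0 : g (pool1 (bisect n)) @[n --> \oo] --> 0.
  apply: g_pool0 => n; last exact: (bisect_pools k0 n mE).1.
  by have [[]] := bisectP n mE.
have gQ0 : g (pool2 (bisect n)) @[n --> \oo] --> 0.
  apply: g_pool0 => n; last exact: (bisect_pools k0 n mE).2.
  by have [[]] := bisectP n mE.
apply/cvgr0Pnorm_lt => e e0; near=> n.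
have [_ [_ _ hb]] := bisectP n mE; apply: le_lt_trans (between_norm hb) _.
rewrite (splitr e) ltrD //; near: n; apply: cvgr0_norm_lt => //; exact: divr_gt0.
Unshelve. all: end_near.
Qed.

Lemma bisect_half : measurable E -> exists F, [/\ measurable F, F `<=` E,
  g F = 2^-1 * g E & forall k, nu k F = 2^-1 * nu k E].
Proof.
move=> mE; pose D n := kept (bisect n).
have mD n : measurable (D n) by have [[]] := bisectP n mE.
exists (\bigcup_n D n); split; first exact: bigcup_measurable.
- by move=> x [n _ Dx]; have [[_ _ _ DE _] _] := bisectP n mE; apply: DE; left.
- apply: (cvg_unique (@Rhausdorff R) (cvg_ac_bigcup g_ac mD bisect_kept_incr)) => /=.
  rewrite (_ : (fun n => g (D n)) = fun n => 2^-1 * g E - deficit (bisect n)).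
    rewrite -[X in _ --> X](subr0 (2^-1 * g E)); apply: cvgB; first exact: cvg_cst.
    exact: bisect_deficit0.
  by apply/funext => n; have [_ [_ <- _]] := bisectP n mE; ring.
- move=> k; apply: (cvg_unique (@Rhausdorff R) (cvg_ac_bigcup (nu_ac k) mD bisect_kept_incr)) => /=.
  rewrite (_ : (fun n => nu k (D n)) =
      fun n => 2^-1 * nu k E - (2^-1) ^+ n * (2^-1 * nu k E)).
    rewrite -[X in _ --> X](subr0 (2^-1 * nu k E)); apply: cvgB; first exact: cvg_cst.
    exact: cvg_halving.
  apply/funext => n; have [_ [/(_ k) [_ _ ->] _ _]] := bisectP n mE.
  by rewrite (bisect_pools k n mE).1.
Qed.

End Bisection.

Section Lyapunov.
Context d (T : measurableType d) (R : realType) (mu : probability T R).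
Local Notation rmu := (rmu mu).
Local Notation ac_additive := (ac_additive mu).

Lemma halvable_extend I (nu : I -> set T -> R) (g : set T -> R) :
  (exists k0, nu k0 = rmu) -> (forall k, ac_additive (nu k)) -> halvable nu ->
  ac_additive g -> halvable (extend nu g).
Proof.
move=> [k0 nu_k0] nu_ac /halvable_choice [hv hvP] g_ac E mE.
have [F [mF FE gF nuF]] := bisect_half nu_k0 nu_ac g_ac hvP mE.
by exists F; split => // -[k|] /=; [exact: nuF | exact: gF].
Qed.

Hypothesis nonat : nonatomic mu.

Lemma halvable_fin n (nu : 'I_n -> set T -> R) :
  (forall k, ac_additive (nu k)) -> halvable (extend nu rmu).
Proof.
elim: n nu => [|n IH] nu nu_ac.
  move=> E mE; have [F [mF FE hF]] := half_subset nonat mE.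
  by exists F; split => // -[[]|].
pose nu' := nu \o lift ord0.
have nu'_ac k : ac_additive (extend nu' rmu k).
  by case: k => [k|]; [exact: nu_ac | exact: rmu_ac].
have := halvable_extend (ex_intro _ None erefl) nu'_ac (IH nu' (fun k => nu_ac _)) (nu_ac ord0).
apply: halvable_reindex => -[k|]; last by exists (Some None).
by case: (unliftP ord0 k) => [j ->|->]; [exists (Some (Some j)) | exists None].
Qed.

Theorem lyapunov (I : finType) (nu : I -> set T -> R) (t : R) :
  (forall k, ac_additive (nu k)) -> 0 <= t <= 1 ->
  exists A, measurable A /\ forall k, nu k A = t * nu k setT.
Proof.
move=> nu_ac t01; pose nu' (j : 'I_#|I|) := nu (enum_val j).
have ext_ac k : ac_additive (extend nu' rmu k).
  by case: k => [j|]; [exact: nu_ac | exact: rmu_ac].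
have [A [mA _ hA]] := halvable_fraction ext_ac
  (halvable_fin (fun j => nu_ac (enum_val j))) measurableT t01.
by exists A; split => // k; rewrite -(enum_rankK k); exact: (hA (Some (enum_rank k))).
Qed.

End Lyapunov.

Section Patching.
Context d (T : measurableType d) (R : realType) (mu : probability T R) (V : Type).

Definition patch (A : set T) (p1 p2 : T -> V) : T -> V :=
  fun h => if h \in A then p1 h else p2 h.

Lemma integral_patch (F : V -> T -> R) (S A : set T) (p1 p2 : T -> V) (t : R) :
  measurable S -> measurable A ->
  mu.-integrable setT (fun h => (F (patch A p1 p2 h) h)%:E) ->
  mu.-integrable setT (fun h => (F (p2 h) h)%:E) ->
  Rintegral mu (A `&` S) (fun h => F (p1 h) h) = t * Rintegral mu S (fun h => F (p1 h) h) ->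
  Rintegral mu (A `&` S) (fun h => F (p2 h) h) = t * Rintegral mu S (fun h => F (p2 h) h) ->
  Rintegral mu S (fun h => F (patch A p1 p2 h) h) =
    t * Rintegral mu S (fun h => F (p1 h) h) + (1 - t) * Rintegral mu S (fun h => F (p2 h) h).
Proof.
move=> mS mA intF int2 h1 h2.
have mAS : measurable (A `&` S) by exact: measurableI.
have mCS : measurable (~` A `&` S) by apply: measurableI => //; exact: measurableC.
have SAC : S = (A `&` S) `|` (~` A `&` S) by rewrite -setIUl setUv setTI.
rewrite {1}SAC Rintegral_setU //; last 2 first.
- by rewrite -SAC; exact: integrableS intF.
- by apply/eqP; rewrite setIACA setICr set0I.
have -> : Rintegral mu (A `&` S) (fun h => F (patch A p1 p2 h) h) =
          Rintegral mu (A `&` S) (fun h => F (p1 h) h).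
  by apply: eq_Rintegral => h; rewrite inE => -[Ah _]; rewrite /patch mem_set.
have -> : Rintegral mu (~` A `&` S) (fun h => F (patch A p1 p2 h) h) =
          Rintegral mu (~` A `&` S) (fun h => F (p2 h) h).
  by apply: eq_Rintegral => h; rewrite inE => -[nAh _]; rewrite /patch memNset.
have := ac_setD (integral_ac int2 mS) measurableT mA (@subsetT _ A).
by rewrite setTD setTI => ->; rewrite h1 h2; ring.
Qed.

Lemma lyapunov_patch (I : finType) (F : I -> V -> T -> R) (S : I -> set T)
    (p1 p2 : T -> V) (t : R) :
  nonatomic mu -> 0 <= t <= 1 -> (forall k, measurable (S k)) ->
  (forall k, mu.-integrable setT (fun h => (F k (p1 h) h)%:E)) ->
  (forall k, mu.-integrable setT (fun h => (F k (p2 h) h)%:E)) ->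
  exists A, measurable A /\ forall k,
    mu.-integrable setT (fun h => (F k (patch A p1 p2 h) h)%:E) ->
    Rintegral mu (S k) (fun h => F k (patch A p1 p2 h) h) =
      t * Rintegral mu (S k) (fun h => F k (p1 h) h) +
      (1 - t) * Rintegral mu (S k) (fun h => F k (p2 h) h).
Proof.
move=> nonat t01 mS int1 int2.
pose nu (kb : I * bool) (B : set T) :=
  Rintegral mu (B `&` S kb.1) (fun h => F kb.1 ((if kb.2 then p1 else p2) h) h).
have nu_ac kb : ac_additive mu (nu kb).
  by case: kb => k [] /=; apply: integral_ac; [exact: int1 | exact: mS | exact: int2 | exact: mS].
have [A [mA hA]] := lyapunov nonat nu_ac t01.
exists A; split => // k intk; apply: integral_patch => //.
- by have := hA (k, true); rewrite /nu /= setTI.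
- by have := hA (k, false); rewrite /nu /= setTI.
Qed.

End Patching.

Lemma ler_convex_comb (R : realType) (t a b a' b' : R) :
  0 <= t <= 1 -> a <= a' -> b <= b' -> t * a + (1 - t) * b <= t * a' + (1 - t) * b'.
Proof.
by move=> /andP[t0 t1] aa bb; rewrite lerD // ler_wpM2l // subr_ge0.
Qed.

Lemma feasible_patch d (T : measurableType d) (R : realType) (L : nat) (Pmax : R)
    (sigma : T -> 'I_L -> bool) (A : set T) (p1 p2 : T -> 'I_L -> R) :
  measurable A -> feasible Pmax sigma p1 -> feasible Pmax sigma p2 ->
  feasible Pmax sigma (patch A p1 p2).
Proof.
move=> mA [mp1 bp1 sp1] [mp2 bp2 sp2]; split => [i|h i|h i]; rewrite /patch.
- rewrite (_ : (fun h => _) = fun h => if h \in A then p1 h i else p2 h i).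
    apply: measurable_fun_ifT; [|exact: mp1|exact: mp2].
    apply: (measurable_fun_bool true); rewrite setTI (_ : _ @^-1` _ = A) //.
    by apply/seteqP; split => h /=; [move=> /set_mem | move=> /mem_set].
  by apply/funext => h; case: ifP.
- by case: ifP.
- by case: ifP.
Qed.

Theorem lemma1 (d : measure_display) (T : measurableType d) (R : realType)
  (L : nat) (hL : (0 < L)%N) (mu : probability T R) (Pmax : R) (hPmax : 0 < Pmax)
  (sigma : T -> 'I_L -> bool)
  (hsigma : forall i : 'I_L, measurable [set h | sigma h i])
  (hrho : forall i : 'I_L, (0 < mu [set h | sigma h i])%E)
  (f0 : ('I_L -> R) -> T -> 'I_L -> R) (fc : 'I_L -> ('I_L -> R) -> T -> R)
  (g : ('I_L -> R) -> R) (c : 'I_L -> R) (hc : forall i, 0 <= c i)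
  (hint0 : forall p, feasible Pmax sigma p -> forall i : 'I_L,
      mu.-integrable setT (fun h => (f0 (p h) h i)%:E))
  (hintc : forall p, feasible Pmax sigma p -> forall i : 'I_L,
      mu.-integrable setT (fun h => (fc i (p h) h)%:E))
  (AS1 : nonatomic mu)
  (AS2 : concave_vec g /\ nondecreasing_vec g) :
  convex_vset (regionC mu Pmax sigma f0 fc g c).
Proof.
move=> x y t [p1 [fp1 hx0 hx]] [p2 [fp2 hy0 hy]] t01.
pose F (k : 'I_L + 'I_L) (q : 'I_L -> R) (h : T) : R :=
  match k with inl i => f0 q h i | inr i => fc i q h end.
pose S (k : 'I_L + 'I_L) : set T :=
  match k with inl _ => setT | inr i => [set h | sigma h i] end.
have intF p : feasible Pmax sigma p -> forall k,
    mu.-integrable setT (fun h => (F k (p h) h)%:E).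
  by move=> fp [i|i]; [exact: hint0 | exact: hintc].
have mS k : measurable (S k) by case: k => i; [exact: measurableT | exact: hsigma].
have [A [mA hA]] := lyapunov_patch (F := F) AS1 t01 mS (intF _ fp1) (intF _ fp2).
have fp := feasible_patch mA fp1 fp2.
exists (patch A p1 p2); split => //.
- rewrite /vobj (_ : (fun i => _) = fun i =>
      t * Rintegral mu setT (fun h => f0 (p1 h) h i) +
      (1 - t) * Rintegral mu setT (fun h => f0 (p2 h) h i)).
    exact: le_trans (ler_convex_comb t01 hx0 hy0) (AS2.1 _ _ _ t01).
  by apply/funext => i; exact: (hA (inl i) (intF _ fp (inl i))).
- move=> i; rewrite /ucon (hA (inr i) (intF _ fp (inr i))) /=.
  set r := (fine _)^-1; set U1 := Rintegral _ _ _; set U2 := Rintegral _ _ _.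
  have -> : t * x (lift ord0 i) + (1 - t) * y (lift ord0 i) + c i =
      t * (x (lift ord0 i) + c i) + (1 - t) * (y (lift ord0 i) + c i) by ring.
  have -> : r * (t * U1 + (1 - t) * U2) = t * (r * U1) + (1 - t) * (r * U2) by ring.
  exact: ler_convex_comb t01 (hx i) (hy i).
Qed.
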